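(* Let $(X_n)_{n\ge1}$ be i.i.d. random variables in $S$, $X^{(n)}=X_n\cdots X_1$, and let $\mu$ be the law of $Y_1=X_1^*$. Then $\mathbb P\bigl(\bigcup_{n\ge1}[X^{(n)}\in S^\circ]\bigr)>0$ if and only if $\kappa(\mu)<1$.
   Context: $S$ is the semigroup of real $q\times q$ matrices with nonnegative entries such that every row and every column contains a strictly positive entry; $S^\circ$ the subset of matrices with all entries strictly positive. $\|x\|=\sum_i|x_i|$; $\overline B$ is the set of $x\in\mathbb R^q$ with nonnegative entries and $\|x\|=1$. For $g\in S$, $x\in\overline B$, $g\cdot x=gx/\|gx\|$. For $x,y\in\overline B$, $m(x,y)=\min\{x_i/y_i: y_i>0\}$ and $d(x,y)=\frac{1-m(x,y)m(y,x)}{1+m(x,y)m(y,x)}$ (a distance on $\overline B$). $\mu^{(n)}$ is the law of $Y^{(n)}=Y_1\cdots Y_n$, $Y_k=X_k^*$; $c(\mu^{(n)})=\sup\{\int_S \frac{d(g\cdot y,g\cdot y')}{d(y,y')}d\mu^{(n)}(g): y,y'\in\overline B,\ y\ne y'\}$ and $\kappa(\mu)=\lim_n c(\mu^{(n)})^{1/n}=\inf_n c(\mu^{(n)})^{1/n}$. *)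

From HB Require Import structures.
From mathcomp Require Import all_boot all_order all_algebra.
From mathcomp Require Import all_classical all_reals all_analysis.
Set Implicit Arguments. Unset Strict Implicit. Unset Printing Implicit Defensive.
Import Order.TTheory GRing.Theory Num.Theory.
Local Open Scope classical_set_scope.
Local Open Scope ring_scope.

(* carrier of q x q real matrices, equipped with a point (needed for the
   generated measurable structure below) *)
Definition sqmx (R : realType) (q : nat) : Type := 'M[R]_q.
HB.instance Definition _ (R : realType) q := Choice.on (sqmx R q).
HB.instance Definition _ (R : realType) q := isPointed.Build (sqmx R q) 0%R.

Section Defs.
Variables (R : realType) (q : nat).

Definition inS (g : 'M[R]_q) : Prop :=
  [/\ forall i j, 0 <= g i j,
      forall i, exists j, 0 < g i j &
      forall j, exists i, 0 < g i j].
Definition inSo (g : 'M[R]_q) : Prop := forall i j, 0 < g i j.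

Definition vnorm (x : 'cV[R]_q) : R := \sum_i `|x i 0|.
Definition inBbar (x : 'cV[R]_q) : Prop :=
  (forall i, 0 <= x i 0) /\ vnorm x = 1.

Definition act (g : 'M[R]_q) (x : 'cV[R]_q) : 'cV[R]_q :=
  (vnorm (g *m x))^-1 *: (g *m x).

Definition mxy (x y : 'cV[R]_q) : R :=
  fine (\big[Order.min/+oo%E]_(i | 0 < y i 0) ((x i 0 / y i 0)%:E)).

Definition dist (x y : 'cV[R]_q) : R :=
  (1 - mxy x y * mxy y x) / (1 + mxy x y * mxy y x).

Definition mx_gen : set (set (sqmx R q)) :=
  [set A | exists i j (B : set R), measurable B /\ A = (fun M : sqmx R q => (M : 'M[R]_q) i j) @^-1` B].
Local Notation Mx := (g_sigma_algebraType mx_gen).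

Local Open Scope ereal_scope.

Variables (d : measure_display) (T : measurableType d).

(* (X_n)_{n>=1} i.i.d., with X_{k+1} represented by X k *)
Definition iid (P : probability T R) (X : nat -> T -> Mx) : Prop :=
  (forall n, measurable_fun setT (X n)) /\
  (forall n (B : set Mx), measurable B -> P (X n @^-1` B) = P (X 0%N @^-1` B)) /\
  (forall (I : seq nat) (B : nat -> set Mx), uniq I ->
     (forall i, i \in I -> measurable (B i)) ->
     P (\bigcap_(i in [set` I]) (X i @^-1` B i)) = \prod_(i <- I) P (X i @^-1` B i)).

Fixpoint Xprod (X : nat -> T -> Mx) (n : nat) (w : T) : Mx :=
  match n with
  | 0%N => (1%:M : 'M[R]_q)
  | k.+1 => (X k w : 'M[R]_q) *m (Xprod X k w : 'M[R]_q)
  end.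

Fixpoint Yprod (X : nat -> T -> Mx) (n : nat) (w : T) : Mx :=
  match n with
  | 0%N => (1%:M : 'M[R]_q)
  | k.+1 => (Yprod X k w : 'M[R]_q) *m (X k w : 'M[R]_q)^T
  end.

Definition mun (P : probability T R) (X : nat -> T -> Mx) (n : nat) : set Mx -> \bar R :=
  pushforward P (Yprod X n).

Definition cmu (P : probability T R) (X : nat -> T -> Mx) (n : nat) : \bar R :=
  ereal_sup [set r | exists y y' : 'cV[R]_q,
     [/\ inBbar y, inBbar y', y <> y' &
         r = \int[mun P X n]_(g in setT)
               ((dist (act g y) (act g y') / dist y y')%R)%:E]].

Definition kappa (P : probability T R) (X : nat -> T -> Mx) : \bar R :=
  ereal_inf [set poweR (cmu P X n) (n%:R)^-1 | n in [set n : nat | (0 < n)%N]].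

End Defs.

Notation Mx R q := (g_sigma_algebraType (@mx_gen R q)).

From HB Require Import structures.
From mathcomp Require Import all_boot all_order all_algebra.
From mathcomp Require Import all_classical all_reals all_analysis.
From mathcomp Require Import ring lra.
Set Implicit Arguments. Unset Strict Implicit. Unset Printing Implicit Defensive.
Import Order.TTheory GRing.Theory Num.Theory.
Local Open Scope classical_set_scope.
Local Open Scope ring_scope.

(* If every entry of g lies in [a, b], the projective action x |-> g.x contracts
   the distance d by at least the factor 1 - (a/b)^2.  Hence, if X^(n) lies in S°
   with positive probability, then with positive probability the entries of
   Y^(n) are pinched between 1/(k+1) and k+1 for some k, so c(mu^(n)) < 1 and
   kappa(mu) < 1.
   Conversely, suppose that almost surely no X^(n) lies in S°.  If for some n every row of X^(n)
   were positive with positive probability, then gluing, row by row, realisations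
   of factors whose positivity patterns all have positive probability would give
   a finite word of such patterns with a positive product; by independence that
   word occurs with positive probability, a contradiction.  So for each n some
   row i of X^(n) almost surely has a zero, i.e. column i of Y^(n) does; then
   Y^(n) maps the uniform vector and e_i to points at distance 1, as they were,
   so c(mu^(n)) >= 1 for every n and kappa(mu) >= 1. *)

Section HilbertDistance.
Variables (R : realType) (q : nat).
Implicit Types (x y : 'cV[R]_q) (g : 'M[R]_q).

Lemma mxyP x y j0 : 0 < y j0 0 ->
  exists j, [/\ 0 < y j 0, mxy x y = x j 0 / y j 0 &
                forall i, 0 < y i 0 -> mxy x y <= x i 0 / y i 0].
Proof.
move=> yj0; rewrite /mxy (@bigmin_eq_arg _ _ _ +oo%E j0) //=; last first.
  by move=> i _; rewrite leey.
by case: arg_minP => //= j yj jmin; exists j; split => // i yi; rewrite -lee_fin; apply: jmin.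
Qed.

Lemma vnormE x : (forall i, 0 <= x i 0) -> vnorm x = \sum_i x i 0.
Proof. by move=> x_ge0; apply: eq_bigr => i _; rewrite ger0_norm. Qed.

Lemma Bbar_sum x : inBbar x -> \sum_i x i 0 = 1.
Proof. by move=> [x_ge0 <-]; rewrite vnormE. Qed.

Lemma Bbar_ge0 x : inBbar x -> forall i j, 0 <= x i j.
Proof. by move=> [x_ge0 _] i j; rewrite (ord1 j). Qed.

Lemma Bbar_exists_gt0 x : inBbar x -> exists i, 0 < x i 0.
Proof.
move=> [x_ge0 x1]; apply/not_existsP => x_le0.
have : vnorm x = 0.
  rewrite vnormE // big1 // => i _; apply/eqP; rewrite eq_le x_ge0 andbT.
  by rewrite leNgt; apply/negP => /(x_le0 i).
by rewrite x1 => /eqP; rewrite oner_eq0.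
Qed.

Lemma mxy_ge0 x y : inBbar x -> inBbar y -> 0 <= mxy x y.
Proof.
move=> [x_ge0 _] By; have [j0 yj0] := Bbar_exists_gt0 By.
have [j [yj -> _]] := mxyP x yj0.
by rewrite divr_ge0 // ltW.
Qed.

Lemma mxy_mulr_le x y i : inBbar x -> inBbar y -> mxy x y * y i 0 <= x i 0.
Proof.
move=> [x_ge0 _] By; have [j0 yj0] := Bbar_exists_gt0 By.
have [j [_ _ jmin]] := mxyP x yj0.
have [yi_gt0|yi_le0] := ltP 0 (y i 0); first by rewrite -ler_pdivlMr // jmin.
have -> : y i 0 = 0 by apply/eqP; rewrite eq_le yi_le0; case: By => ->.
by rewrite mulr0.
Qed.

Lemma mxy_le1 x y : inBbar x -> inBbar y -> mxy x y <= 1.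
Proof.
move=> Bx By; have -> : mxy x y = \sum_i mxy x y * y i 0.
  by rewrite -mulr_sumr Bbar_sum // mulr1.
by rewrite -(Bbar_sum Bx); apply: ler_sum => i _; exact: mxy_mulr_le.
Qed.

Lemma mxy_mul_le1 x y : inBbar x -> inBbar y -> 0 <= mxy x y * mxy y x <= 1.
Proof.
move=> Bx By; rewrite mulr_ge0 ?mxy_ge0 //=.
by rewrite -[1](mulr1 1) ler_pM ?mxy_ge0 ?mxy_le1.
Qed.

Lemma distC x y : dist x y = dist y x.
Proof. by rewrite /dist [mxy x y * _]mulrC. Qed.

Lemma dist_ge0 x y : inBbar x -> inBbar y -> 0 <= dist x y.
Proof.
move=> Bx By; have /andP[p_ge0 p_le1] := mxy_mul_le1 Bx By.
by rewrite divr_ge0 ?subr_ge0 // addr_ge0.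
Qed.

Lemma dist_eq1 x y k : inBbar x -> inBbar y -> x k 0 = 0 -> 0 < y k 0 -> dist x y = 1.
Proof.
move=> Bx By xk0 yk_gt0; have [j [_ _ jmin]] := mxyP x yk_gt0.
have mxy0 : mxy x y = 0.
  by apply/eqP; rewrite eq_le mxy_ge0 // andbT (le_trans (jmin k yk_gt0)) // xk0 mul0r.
by rewrite /dist mxy0 mul0r subr0 addr0 divr1.
Qed.

End HilbertDistance.

(* With [Q] the product of the improved lower bounds on [m(gx,gy)] and
   [m(gy,gx)], the point is [1 - Q <= (1 - r^2) (1 - m s)]. *)
Lemma contraction_ineq (R : realFieldType) (m s r p : R) :
  0 <= m <= 1 -> 0 <= s <= 1 -> 0 <= r <= 1 ->
  (m + r * (1 - m)) * (s + r * (1 - s)) <= p -> p <= 1 ->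
  (1 - p) / (1 + p) <= (1 - r ^+ 2) * ((1 - m * s) / (1 + m * s)).
Proof.
move=> /andP[m_ge0 m_le1] /andP[s_ge0 s_le1] /andP[r_ge0 r_le1] Qp p_le1.
set Q := _ * _ in Qp.
have ms_le_Q : m * s <= Q by rewrite ler_pM // lerDl mulr_ge0 // subr_ge0.
have ms_ge0 : 0 <= m * s by rewrite mulr_ge0.
have ms_le1 : m * s <= 1 by rewrite -[1](mulr1 1) ler_pM.
have p_ge0 : 0 <= p by rewrite (le_trans ms_ge0) // (le_trans ms_le_Q).
have key : 1 - Q <= (1 - r ^+ 2) * (1 - m * s).
  rewrite -subr_ge0 (_ : _ - _ = r * (1 - r) * ((1 - m) * s + (1 - s) * m)); last first.
    by rewrite /Q; ring.
  by apply: mulr_ge0; [apply: mulr_ge0|apply: addr_ge0; apply: mulr_ge0];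
    rewrite // subr_ge0.
have r2_le1 : 0 <= 1 - r ^+ 2 by rewrite subr_ge0 expr_le1.
rewrite mulrA ler_pdivrMr ?ltr_wpDr // mulrAC ler_pdivlMr ?ltr_wpDr //.
apply: (@le_trans _ _ ((1 - Q) * (1 + m * s))).
  by rewrite ler_wpM2r ?addr_ge0 // lerB.
apply: (@le_trans _ _ ((1 - r ^+ 2) * (1 - m * s) * (1 + m * s))).
  by rewrite ler_wpM2r ?addr_ge0.
rewrite ler_wpM2l ?lerD2l ?(le_trans ms_le_Q) //.
by rewrite mulr_ge0 // subr_ge0.
Qed.

Section NonnegativeMatrices.
Variable R : numDomainType.

Lemma mulmx_ge0 (m n p : nat) (A : 'M[R]_(m, n)) (B : 'M[R]_(n, p)) :
  (forall i j, 0 <= A i j) -> (forall i j, 0 <= B i j) ->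
  forall i j, 0 <= (A *m B) i j.
Proof. by move=> A_ge0 B_ge0 i j; rewrite mxE sumr_ge0 // => k _; rewrite mulr_ge0. Qed.

Lemma mulmx_entry_ge (m n p : nat) (A : 'M[R]_(m, n)) (B : 'M[R]_(n, p)) i j l :
  (forall i j, 0 <= A i j) -> (forall i j, 0 <= B i j) ->
  A i l * B l j <= (A *m B) i j.
Proof.
move=> A_ge0 B_ge0; rewrite mxE (bigD1 l) //= lerDl sumr_ge0 // => k _.
exact: mulr_ge0.
Qed.

Lemma mx_entry_le_sum (m n : nat) (A : 'M[R]_(m, n)) i j :
  (forall i j, 0 <= A i j) -> A i j <= \sum_k \sum_l A k l.
Proof.
move=> A_ge0; rewrite (bigD1 i) //= (bigD1 j) //= -addrA lerDl addr_ge0 ?sumr_ge0 //.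
by move=> k _; rewrite sumr_ge0.
Qed.

End NonnegativeMatrices.

Section BirkhoffContraction.
Variables (R : realType) (q : nat).
Implicit Types (x y : 'cV[R]_q) (g : 'M[R]_q).

Lemma vnorm_mulmx_gt0 g x : inS g -> inBbar x -> 0 < vnorm (g *m x).
Proof.
move=> [g_ge0 _ g_col] Bx; have [j xj] := Bbar_exists_gt0 Bx.
have [i gij] := g_col j; have gx_ge0 := mulmx_ge0 g_ge0 (Bbar_ge0 Bx).
rewrite vnormE => [|k]; last exact: gx_ge0.
rewrite (bigD1 i) //= ltr_wpDr //; first by rewrite sumr_ge0 // => k _; exact: gx_ge0.
exact: lt_le_trans (mulr_gt0 gij xj) (mulmx_entry_ge i 0 j g_ge0 (Bbar_ge0 Bx)).
Qed.

Lemma act_entry g x i : act g x i 0 = (g *m x) i 0 / vnorm (g *m x).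
Proof. by rewrite /act mxE mulrC. Qed.

Lemma act_Bbar g x : inS g -> inBbar x -> inBbar (act g x).
Proof.
move=> Sg Bx; have gx_gt0 := vnorm_mulmx_gt0 Sg Bx.
have [g_ge0 _ _] := Sg; have gx_ge0 := mulmx_ge0 g_ge0 (Bbar_ge0 Bx).
have act_ge0 i : 0 <= act g x i 0 by rewrite act_entry divr_ge0 ?gx_ge0 ?ltW.
split => //; rewrite vnormE //.
under eq_bigr do rewrite act_entry.
by rewrite -mulr_suml -vnormE ?divff ?gt_eqF // => i; exact: gx_ge0.
Qed.

Section EntryBounds.
Variables (g : 'M[R]_q) (a b : R).
Hypotheses (Sg : inS g) (a_ge0 : 0 <= a) (b_gt0 : 0 < b).
Hypotheses (g_ge : forall i j, a <= g i j) (g_le : forall i j, g i j <= b).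

(* Since [x - m(x,y) y >= 0] has mass [1 - m(x,y)], every entry of [g (x - m(x,y) y)]
   is at least [a (1 - m(x,y))], while every entry of [g y] is at most [b]. *)
Lemma mulmx_mxy_ge x y i : inBbar x -> inBbar y ->
  (mxy x y + a / b * (1 - mxy x y)) * (g *m y) i 0 <= (g *m x) i 0.
Proof.
move=> Bx By; set m := mxy x y; have m_le1 : m <= 1 := mxy_le1 Bx By.
have gxmy : (g *m x) i 0 - m * (g *m y) i 0 = \sum_j g i j * (x j 0 - m * y j 0).
  by rewrite !mxE mulr_sumr -sumrB; apply: eq_bigr => j _; ring.
have gxmy_ge : a * (1 - m) <= \sum_j g i j * (x j 0 - m * y j 0).
  have -> : a * (1 - m) = \sum_j a * (x j 0 - m * y j 0).
    by rewrite -mulr_sumr sumrB -mulr_sumr !Bbar_sum // mulr1.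
  apply: ler_sum => j _; apply: ler_wpM2r => //.
  by rewrite subr_ge0; exact: mxy_mulr_le.
have gy_le : (g *m y) i 0 <= b.
  rewrite mxE -[b]mulr1 -(Bbar_sum By) mulr_sumr; apply: ler_sum => j _.
  by apply: ler_wpM2r => //; case: By.
have gy_mul_le : a / b * (1 - m) * (g *m y) i 0 <= a * (1 - m).
  apply: (@le_trans _ _ (a / b * (1 - m) * b)); last by rewrite mulrAC divfK ?gt_eqF.
  have ab_ge0 : 0 <= a / b by rewrite divr_ge0 // ltW.
  by apply: ler_wpM2l gy_le; rewrite mulr_ge0 // subr_ge0.
have := le_trans gy_mul_le gxmy_ge; rewrite -gxmy mulrDl; lra.
Qed.

Lemma mxy_act_ge x y : inBbar x -> inBbar y ->
  (mxy x y + a / b * (1 - mxy x y)) * (vnorm (g *m y) / vnorm (g *m x))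
  <= mxy (act g x) (act g y).
Proof.
move=> Bx By; have [j0 j0_gt0] := Bbar_exists_gt0 (act_Bbar Sg By).
have [j [+ -> _]] := mxyP (act g x) j0_gt0.
have gx_gt0 := vnorm_mulmx_gt0 Sg Bx; have gy_gt0 := vnorm_mulmx_gt0 Sg By.
rewrite !act_entry pmulr_lgt0 ?invr_gt0 // => gyj_gt0.
have -> : (g *m x) j 0 / vnorm (g *m x) / ((g *m y) j 0 / vnorm (g *m y)) =
          (g *m x) j 0 / (g *m y) j 0 * (vnorm (g *m y) / vnorm (g *m x)).
  by field; rewrite !gt_eqF.
apply: ler_wpM2r; first by rewrite divr_ge0 // ltW.
by rewrite ler_pdivlMr //; exact: mulmx_mxy_ge.
Qed.

Lemma dist_act_le x y : inBbar x -> inBbar y ->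
  dist (act g x) (act g y) <= (1 - (a / b) ^+ 2) * dist x y.
Proof.
move=> Bx By; have [i0 _] := Bbar_exists_gt0 Bx.
have ab_ge0 : 0 <= a / b by rewrite divr_ge0 // ltW.
have ab_le1 : a / b <= 1 by rewrite ler_pdivrMr // mul1r (le_trans (g_ge i0 i0)).
have gx_gt0 := vnorm_mulmx_gt0 Sg Bx; have gy_gt0 := vnorm_mulmx_gt0 Sg By.
have low_ge0 z z' : inBbar z -> inBbar z' -> 0 <= mxy z z' + a / b * (1 - mxy z z').
  by move=> Bz Bz'; rewrite addr_ge0 ?mxy_ge0 // mulr_ge0 // subr_ge0 mxy_le1.
apply: contraction_ineq; rewrite ?mxy_ge0 ?mxy_le1 ?ab_ge0 ?ab_le1 //.
- have -> : (mxy x y + a / b * (1 - mxy x y)) * (mxy y x + a / b * (1 - mxy y x)) =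
      ((mxy x y + a / b * (1 - mxy x y)) * (vnorm (g *m y) / vnorm (g *m x))) *
      ((mxy y x + a / b * (1 - mxy y x)) * (vnorm (g *m x) / vnorm (g *m y))).
    by field; rewrite !gt_eqF.
  by apply: ler_pM; rewrite ?mxy_act_ge // mulr_ge0 ?low_ge0 // divr_ge0 ?ltW.
- by have /andP[] := mxy_mul_le1 (act_Bbar Sg Bx) (act_Bbar Sg By).
Qed.

End EntryBounds.

End BirkhoffContraction.

Section ContractionRatio.
Variables (R : realType) (q : nat).
Implicit Types (x y : 'cV[R]_q) (g : 'M[R]_q).

Definition ratio g y y' : R := dist (act g y) (act g y') / dist y y'.

Lemma ratio_ge0 g y y' : inS g -> inBbar y -> inBbar y' -> 0 <= ratio g y y'.
Proof. by move=> Sg By By'; apply: divr_ge0; apply: dist_ge0 => //; exact: act_Bbar. Qed.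

Lemma ratio_le g a b y y' : inS g -> 0 <= a -> 0 < b ->
  (forall i j, a <= g i j) -> (forall i j, g i j <= b) ->
  inBbar y -> inBbar y' -> ratio g y y' <= 1 - (a / b) ^+ 2.
Proof.
move=> Sg a_ge0 b_gt0 g_ge g_le By By'; have [i0 _] := Bbar_exists_gt0 By.
have ab_le1 : a / b <= 1 by rewrite ler_pdivrMr // mul1r (le_trans (g_ge i0 i0)).
have contr := dist_act_le Sg a_ge0 b_gt0 g_ge g_le By By'.
rewrite /ratio; have [<-|dist_gt0] := eqVneq 0 (dist y y').
  by rewrite invr0 mulr0 subr_ge0 expr_le1 // divr_ge0 // ltW.
by rewrite ler_pdivrMr // lt_def eq_sym dist_gt0 dist_ge0.
Qed.

Lemma ratio_le1 g y y' : inS g -> inBbar y -> inBbar y' -> ratio g y y' <= 1.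
Proof.
move=> [g_ge0 ? ?] By By'; set b := 1 + \sum_k \sum_l g k l.
have b_gt0 : 0 < b by rewrite ltr_wpDr // sumr_ge0 // => k _; rewrite sumr_ge0.
have := @ratio_le g 0 b y y'; rewrite mul0r expr0n subr0; apply => // i j.
by rewrite (le_trans (mx_entry_le_sum i j g_ge0)) // lerDr.
Qed.

Definition unif : 'cV[R]_q := const_mx q%:R^-1.
Definition evec (i : 'I_q) : 'cV[R]_q := \col_j (j == i)%:R.

Lemma unif_Bbar : (0 < q)%N -> inBbar unif.
Proof.
move=> q_gt0; have unif_ge0 j : 0 <= unif j 0 by rewrite mxE invr_ge0.
split => //; rewrite vnormE //; under eq_bigr do rewrite mxE.
by rewrite sumr_const card_ord -[_ *+ q]mulr_natr mulVf // pnatr_eq0 -lt0n.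
Qed.

Lemma evec_Bbar i : inBbar (evec i).
Proof.
have evec_ge0 j : 0 <= evec i j 0 by rewrite mxE ler0n.
split => //; rewrite vnormE // (bigD1 i) //= big1 => [|j ji]; rewrite mxE ?eqxx ?addr0 //.
by rewrite (negbTE ji).
Qed.

Lemma unif_neq_evec (i j : 'I_q) : j != i -> unif != evec i.
Proof.
move=> ji; apply/eqP => /(congr1 (fun v : 'cV[R]_q => v j 0)).
rewrite !mxE (negbTE ji) => /eqP; rewrite invr_eq0 pnatr_eq0 => /eqP q0.
by case: q j q0 {i ji} => [[]|].
Qed.

(* [g e_i] vanishes at row [k] while [g u] does not, so [m(g e_i, g u) = 0]:
   the images stay at distance [1], like [u] and [e_i]. *)
Lemma ratio_unif_evec g (i j k : 'I_q) : j != i -> inS g -> g k i = 0 ->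
  ratio g unif (evec i) = 1.
Proof.
move=> ji Sg gki0; have q_gt0 : (0 < q)%N by case: q i {ji gki0} => [[]|].
have Bu := unif_Bbar q_gt0; have Be := evec_Bbar i.
have d1 : dist unif (evec i) = 1.
  by rewrite distC (@dist_eq1 _ _ _ _ j) // !mxE ?(negbTE ji) // invr_gt0 ltr0n.
have [g_ge0 g_row _] := Sg; have [l gkl] := g_row k.
have d2 : dist (act g unif) (act g (evec i)) = 1.
  rewrite distC; apply: (@dist_eq1 _ _ _ _ k); [exact: act_Bbar|exact: act_Bbar| |].
    rewrite act_entry mxE (bigD1 i) //= big1 => [|l' l'i]; last by rewrite mxE (negbTE l'i) mulr0.
    by rewrite mxE eqxx mulr1 addr0 gki0 mul0r.
  rewrite act_entry divr_gt0 ?vnorm_mulmx_gt0 //.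
  apply: lt_le_trans (mulmx_entry_ge k 0 l g_ge0 (Bbar_ge0 Bu)).
  by rewrite mxE mulr_gt0 // invr_gt0 ltr0n.
by rewrite /ratio d1 d2 divr1.
Qed.

End ContractionRatio.

Section MeasurableSets.
Context (d : measure_display) (T : measurableType d) (R : realType).

Lemma measurable_ltr_set (f g : T -> R) : measurable_fun setT f -> measurable_fun setT g ->
  measurable [set w | f w < g w].
Proof.
move=> mf mg; have -> : [set w | f w < g w] = setT `&` (fun w => f w < g w) @^-1` [set true].
  by apply/seteqP; split => w //= [].
exact: measurable_realfun.measurable_fun_ltr.
Qed.

Lemma measurable_ler_set (f g : T -> R) : measurable_fun setT f -> measurable_fun setT g ->
  measurable [set w | f w <= g w].
Proof.
move=> mf mg; have -> : [set w | f w <= g w] = setT `&` (fun w => f w <= g w) @^-1` [set true].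
  by apply/seteqP; split => w //= [].
exact: measurable_realfun.measurable_fun_ler.
Qed.

Lemma measurable_forall (I : finType) (A : I -> set T) : (forall i, measurable (A i)) ->
  measurable [set w | forall i, A i w].
Proof.
move=> mA; have -> : [set w | forall i, A i w] = \bigcap_(i in [set: I]) A i.
  by apply/seteqP; split => w /= Aw i //; exact: Aw.
by apply: fin_bigcap_measurable => //; exact: finite_finset.
Qed.

Lemma measurable_exists (I : finType) (A : I -> set T) : (forall i, measurable (A i)) ->
  measurable [set w | exists i, A i w].
Proof.
move=> mA; have -> : [set w | exists i, A i w] = \bigcup_(i in [set: I]) A i.
  by apply/seteqP; split => w /= [i Aw]; exists i.
by apply: fin_bigcup_measurable => //; exact: finite_finset.
Qed.

Lemma measure_bigcup_gt0 (mu : {measure set T -> \bar R}) (D : set nat) (F : nat -> set T) :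
  (forall n, measurable (F n)) -> (0 < mu (\bigcup_(n in D) F n))%E ->
  exists2 n, D n & (0 < mu (F n))%E.
Proof.
move=> mF; apply: contraPP => none.
have : mu.-negligible (\bigcup_(n in D) F n).
  rewrite bigcup_mkcond; apply: negligible_bigcup => n.
  case: ifPn => [/set_mem Dn|_]; last exact: negligible_set0.
  apply/negligibleP => //; apply/eqP; rewrite eq_le measure_ge0 andbT leNgt.
  by apply/negP => Fn_gt0; apply: none; exists n.
by move/measure_negligible => -> //; [rewrite ltxx | exact: bigcup_measurable].
Qed.

Lemma negligible_exists_fin (mu : {measure set T -> \bar R}) (I : finType) (F : I -> set T) :
  (forall i, mu.-negligible (F i)) -> mu.-negligible [set w | exists i, F i w].
Proof.
move=> F_null; suff /(_ (enum I)) : forall s : seq I,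
    mu.-negligible [set w | exists2 i, i \in s & F i w].
  by apply: negligibleS => w [i Fi]; exists i; rewrite ?mem_enum.
elim=> [|i s IH]; first by apply: negligibleS (negligible_set0 mu) => w [].
apply: negligibleS (negligibleU (F_null i) IH) => w [j].
by rewrite in_cons => /predU1P[-> Fi|js Fj]; [left|right; exists j].
Qed.

End MeasurableSets.

Section MatrixMeasurability.
Context (R : realType) (q : nat) (d : measure_display) (T : measurableType d).
Variable X : nat -> T -> Mx R q.
Hypothesis mX : forall n, measurable_fun setT (X n).

Lemma entry_mfun i j : measurable_fun setT (fun M : Mx R q => (M : 'M[R]_q) i j).
Proof. by move=> _ B mB; rewrite setTI; apply: sub_sigma_algebra; exists i, j, B. Qed.

Lemma measurable_inS : measurable [set g : Mx R q | inS (g : 'M[R]_q)].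
Proof.
have -> : [set g : Mx R q | inS (g : 'M[R]_q)] =
    [set g : Mx R q | forall i j, 0 <= (g : 'M[R]_q) i j] `&`
    [set g : Mx R q | forall i, exists j, 0 < (g : 'M[R]_q) i j] `&`
    [set g : Mx R q | forall j, exists i, 0 < (g : 'M[R]_q) i j].
  by apply/seteqP; split => g /=; [case|move=> [[]]].
have entry_gt0 i j : measurable [set g : Mx R q | 0 < (g : 'M[R]_q) i j].
  by apply: measurable_ltr_set; [exact: measurable_cst|exact: entry_mfun].
apply: measurableI; first apply: measurableI.
- apply: measurable_forall => i; apply: measurable_forall => j.
  by apply: measurable_ler_set; [exact: measurable_cst|exact: entry_mfun].
- by apply: measurable_forall => i; apply: measurable_exists => j; exact: entry_gt0.
- by apply: measurable_forall => j; apply: measurable_exists => i; exact: entry_gt0.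
Qed.

Lemma Xprod_entry_mfun n i j :
  measurable_fun setT (fun w => (Xprod X n w : 'M[R]_q) i j).
Proof.
elim: n i j => [|n IH] i j /=; first exact: measurable_cst.
under eq_fun do rewrite mxE.
apply: measurable_sum => k; apply: measurable_realfun.measurable_funM => //.
exact: measurableT_comp (entry_mfun i k) (mX n).
Qed.

Lemma Yprod_trmx n w : (Yprod X n w : 'M[R]_q) = (Xprod X n w : 'M[R]_q)^T.
Proof. by elim: n => [|n IH] /=; rewrite ?trmx1 // IH trmx_mul. Qed.

Lemma Yprod_entry_mfun n i j :
  measurable_fun setT (fun w => (Yprod X n w : 'M[R]_q) i j).
Proof.
under eq_fun do rewrite Yprod_trmx mxE.
exact: Xprod_entry_mfun.
Qed.

Lemma Yprod_mfun n : measurable_fun setT (Yprod X n : T -> Mx R q).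
Proof.
apply: (@measurability _ _ T (Mx R q) setT (Yprod X n) (@mx_gen R q)) => //.
move=> _ [_ [i [j [B [mB ->]]]] <-].
by rewrite setTI; have := Yprod_entry_mfun n i j measurableT mB; rewrite setTI.
Qed.

End MatrixMeasurability.

Import HBNNSimple.

Section SimpleComp.
Context d d' (T : measurableType d) (U : measurableType d') (R : realType).
Variables (Y : T -> U) (mY : measurable_fun setT Y) (h : {nnsfun U >-> R}).

Let hY := h \o Y.

Let hY_finite_range : finite_set (range hY).
Proof. by apply: sub_finite_set (@fimfunP _ _ h) => _ [w _ <-]; exists (Y w). Qed.

HB.instance Definition _ := isMeasurableFun.Build _ _ _ _ hY
  (measurableT_comp (measurable_funPT h) mY).
HB.instance Definition _ := FiniteImage.Build _ _ hY hY_finite_range.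
HB.instance Definition _ := isNonNegFun.Build _ _ hY (fun x => fun_ge0 (Y x)).

Local Open Scope ereal_scope.

Lemma sintegral_comp_le (P : probability T R) (A : set T) (mA : measurable A) (c : R) :
  (0 <= c)%R -> (forall w, h (Y w) + c * \1_A w <= 1)%R ->
  sintegral P (h \o Y) <= 1 - c%:E * P A.
Proof.
move=> c_ge0 hY_le1.
pose g : {nnsfun T >-> R} := add_nnsfun [the {nnsfun T >-> R} of hY]
   (scale_nnsfun (indic_nnsfun R mA) c_ge0).
have g_le1 : sintegral P g <= sintegral P (cst_nnsfun T (NngNum (@ler01 R))).
  by apply: le_sintegral => w; rewrite /g /= hY_le1.
have cst1 : sintegral P (cst_nnsfun T (NngNum (@ler01 R))) = 1.
  rewrite (eq_sintegral (\1_setT)); first by rewrite sintegral_indic; exact: probability_setT.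
  by move=> w; rewrite /= indicE in_setT.
have gE : sintegral P g = sintegral P hY + c%:E * P A.
  by rewrite /g sintegralD /scale_nnsfun sintegralrM sintegral_indic.
rewrite leeBrDr ?fin_numM ?fin_num_measure // -gE -cst1.
exact: g_le1.
Qed.

End SimpleComp.

Section PushforwardIntegral.
Context d d' (T : measurableType d) (U : measurableType d') (R : realType).
Variables (P : probability T R) (Y : T -> U) (mY : measurable_fun setT Y).
Variables (S : set U) (f : U -> R).
Hypotheses (SY : forall w, S (Y w)) (f_ge0 : forall g, S g -> (0 <= f g)%R).
Local Open Scope ereal_scope.

(* [f] need not be measurable: its integral is still the supremum of the
   integrals of the simple functions below [f^+], and [f^-] vanishes on [S]. *)
Lemma integral_pushforwardE : \int[pushforward P Y]_(g in setT) (f g)%:E =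
  ereal_sup [set sintegral P (h \o Y) | h in
    [set h : {nnsfun U >-> R} | forall g, (h g)%:E <= ((fun g => (f g)%:E)^\+ g)]].
Proof.
rewrite /integral /= patch_setT.
suff -> : ereal_sup [set sintegral (pushforward P Y) h | h in [set h : {nnsfun U >-> R} |
    (forall x, (h x)%:E <= (fun g => (f g)%:E)^\- x)]] = 0 by rewrite sube0.
apply/eqP; rewrite eq_le; apply/andP; split.
  apply: ge_ereal_sup => _ [h h_le <-].
  rewrite (_ : sintegral _ h = sintegral P (h \o Y)) //.
  rewrite (eq_sintegral (cst 0%R)) ?sintegral0 // => w /=.
  apply/eqP; rewrite eq_le fun_ge0 andbT -lee_fin (le_trans (h_le (Y w))) //.
  by rewrite funenegE /= ge_max lexx andbT lee_fin oppr_le0 f_ge0.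
apply: ereal_sup_ubound; exists nnsfun0; first by move=> x /=; rewrite funeneg_ge0.
by rewrite (_ : sintegral _ nnsfun0 = sintegral P (@nnsfun0 _ U R \o Y)) //
  (eq_sintegral (cst 0%R)) ?sintegral0.
Qed.

Lemma integral_pushforward_ge (B : \bar R) (h : {nnsfun U >-> R}) :
  (forall g, (h g)%:E <= ((fun g => (f g)%:E)^\+ g)) -> B <= sintegral P (h \o Y) ->
  B <= \int[pushforward P Y]_(g in setT) (f g)%:E.
Proof.
move=> h_le B_le; rewrite integral_pushforwardE (le_trans B_le) //.
by apply: ereal_sup_ubound; exists h.
Qed.

Lemma integral_pushforward_ge0 : 0 <= \int[pushforward P Y]_(g in setT) (f g)%:E.
Proof.
apply: (@integral_pushforward_ge _ nnsfun0); first by move=> g /=; rewrite funepos_ge0.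
by rewrite (eq_sintegral (cst 0%R)) ?sintegral0.
Qed.

Lemma integral_pushforward_ge_measure (F : set U) : measurable F ->
  (forall g, F g -> (1 <= f g)%R) ->
  P (Y @^-1` F) <= \int[pushforward P Y]_(g in setT) (f g)%:E.
Proof.
move=> mF f_ge1; apply: (@integral_pushforward_ge _ (indic_nnsfun R mF)).
  move=> g; rewrite (_ : indic_nnsfun R mF g = \1_F g) // funeposE /= indicE.
  case: (boolP (g \in F)) => [/set_mem Fg|_] /=; last by rewrite le_max lexx orbT.
  by rewrite le_max lee_fin f_ge1.
by rewrite (eq_sintegral (\1_(Y @^-1` F))) ?sintegral_indic.
Qed.

Lemma integral_pushforward_le_indic (A : set T) (c : R) : measurable A -> (0 <= c)%R ->
  (forall w, f (Y w) + c * \1_A w <= 1)%R ->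
  \int[pushforward P Y]_(g in setT) (f g)%:E <= 1 - c%:E * P A.
Proof.
move=> mA c_ge0 fY_le; rewrite integral_pushforwardE; apply: ge_ereal_sup => _ [h h_le <-].
apply: sintegral_comp_le => // w; apply: le_trans (fY_le w); rewrite lerD2r.
by have := h_le (Y w); rewrite funeposE /= (max_idPl _) ?lee_fin ?f_ge0.
Qed.

End PushforwardIntegral.

Section PositiveProducts.
Variables (R : realType) (q : nat).
Implicit Types (A B M : 'M[R]_q) (s t : seq 'M[R]_q).

Definition prodL s : 'M[R]_q := foldl (fun acc M => M *m acc) 1%:M s.

Lemma prodL_rcons s M : prodL (rcons s M) = M *m prodL s.
Proof. by rewrite /prodL foldl_rcons. Qed.

Lemma prodL_cat s t : prodL (s ++ t) = prodL t *m prodL s.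
Proof.
elim/last_ind: t => [|t M IH]; first by rewrite cats0 mul1mx.
by rewrite -rcons_cat !prodL_rcons IH mulmxA.
Qed.

Lemma inS_mul A B : inS A -> inS B -> inS (A *m B).
Proof.
move=> [A_ge0 A_row A_col] [B_ge0 B_row B_col]; split.
- exact: mulmx_ge0.
- move=> i; have [l Ail] := A_row i; have [j Blj] := B_row l; exists j.
  exact: lt_le_trans (mulr_gt0 Ail Blj) (mulmx_entry_ge i j l A_ge0 B_ge0).
- move=> j; have [l Blj] := B_col j; have [i Ail] := A_col l; exists i.
  exact: lt_le_trans (mulr_gt0 Ail Blj) (mulmx_entry_ge i j l A_ge0 B_ge0).
Qed.

Lemma inS_1 : inS (1%:M : 'M[R]_q).
Proof.
split=> [i j|i|j]; first by rewrite mxE ler0n.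
  by exists i; rewrite mxE eqxx ltr01.
by exists j; rewrite mxE eqxx ltr01.
Qed.

Lemma inS_trmx A : inS A -> inS A^T.
Proof.
move=> [A_ge0 A_row A_col]; split=> [i j|i|j]; first by rewrite mxE.
  by have [j Aji] := A_col i; exists j; rewrite mxE.
by have [i Aji] := A_row j; exists i; rewrite mxE.
Qed.

Lemma inS_prodL s : {in s, forall M, inS M} -> inS (prodL s).
Proof.
elim/last_ind: s => [|s M IH] Ss; first exact: inS_1.
rewrite prodL_rcons; apply: inS_mul; first by apply: Ss; rewrite mem_rcons mem_head.
by apply: IH => N sN; apply: Ss; rewrite mem_rcons in_cons sN orbT.
Qed.

(* Row by row: if a product is positive on rows [< k], its row [k] has a positive
   entry [l], and multiplying it on the right by a product positive on row [l]
   makes row [k] positive while keeping the earlier rows positive, since that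
   factor lies in [S]. *)
Lemma inSo_prodL_of_rows (good : 'M[R]_q -> Prop) : (0 < q)%N ->
  (forall i, exists s, [/\ s != [::], {in s, forall M, good M /\ inS M} &
       forall j, 0 < prodL s i j]) ->
  exists s, [/\ s != [::], {in s, forall M, good M /\ inS M} & inSo (prodL s)].
Proof.
move=> q_gt0 rows.
suff /(_ q (leqnn q)) [s [s0 goodS s_pos]] : forall k, (k <= q)%N ->
    exists s, [/\ s != [::], {in s, forall M, good M /\ inS M} &
      forall i : 'I_q, (i < k)%N -> forall j, 0 < prodL s i j].
  by exists s; split => // i j; exact: s_pos.
elim=> [|k IH] kq; first by have [s [s0 goodS _]] := rows (Ordinal q_gt0); exists s.
have [s [s0 goodS s_pos]] := IH (ltnW kq).
have [Ss_ge0 Ss_row _] := inS_prodL (fun M sM => (goodS M sM).2).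
have [l skl] := Ss_row (Ordinal kq).
have [t [t0 goodT t_pos]] := rows l.
have [St_ge0 _ St_col] := inS_prodL (fun M tM => (goodT M tM).2).
exists (t ++ s); split.
- by case: t t0 {goodT t_pos St_ge0 St_col}.
- by move=> M; rewrite mem_cat => /orP[/goodT|/goodS].
- move=> i; rewrite ltnS leq_eqVlt => /orP[/eqP ik|ik] j; rewrite prodL_cat.
  + have -> : i = Ordinal kq by exact: val_inj.
    exact: lt_le_trans (mulr_gt0 skl (t_pos j)) (mulmx_entry_ge _ _ _ Ss_ge0 St_ge0).
  + have [l' tl'j] := St_col j.
    exact: lt_le_trans (mulr_gt0 (s_pos i ik l') tl'j) (mulmx_entry_ge _ _ _ Ss_ge0 St_ge0).
Qed.

Definition pattern M : {ffun 'I_q * 'I_q -> bool} := [ffun ij => 0 < M ij.1 ij.2].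

Lemma patternP A B : pattern A = pattern B <-> forall i j, (0 < A i j) = (0 < B i j).
Proof.
split => [eAB i j|eAB]; last by apply/ffunP => -[i j]; rewrite !ffunE /= eAB.
by have := congr1 (fun f : {ffun _ -> bool} => f (i, j)) eAB; rewrite !ffunE.
Qed.

Lemma mulmx_gt0E A B i j : (forall i j, 0 <= A i j) -> (forall i j, 0 <= B i j) ->
  (0 < (A *m B) i j) = [exists l, (0 < A i l) && (0 < B l j)].
Proof.
move=> A_ge0 B_ge0; apply/idP/idP => [|/existsP[l /andP[Ail Blj]]]; last first.
  exact: lt_le_trans (mulr_gt0 Ail Blj) (mulmx_entry_ge i j l A_ge0 B_ge0).
apply: contraLR => /existsPn none; rewrite -leNgt mxE sumr_le0 // => l _.
move: (none l); rewrite negb_and -!leNgt => /orP[Ail|Blj].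
  by rewrite (@le_anti _ _ (A i l) 0) ?Ail ?A_ge0 ?mul0r.
by rewrite (@le_anti _ _ (B l j) 0) ?Blj ?B_ge0 ?mulr0.
Qed.

Lemma pattern_mul A B A' B' : inS A -> inS B -> inS A' -> inS B' ->
  pattern A = pattern A' -> pattern B = pattern B' -> pattern (A *m B) = pattern (A' *m B').
Proof.
move=> [A_ge0 _ _] [B_ge0 _ _] [A'_ge0 _ _] [B'_ge0 _ _] /patternP eA /patternP eB.
by apply/patternP => i j; rewrite !mulmx_gt0E //; apply: eq_existsb => l; rewrite eA eB.
Qed.

Lemma pattern_prodL s t : size s = size t ->
  (forall k, (k < size s)%N -> pattern (nth 0 s k) = pattern (nth 0 t k)) ->
  {in s, forall M, inS M} -> {in t, forall M, inS M} ->
  pattern (prodL s) = pattern (prodL t).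
Proof.
elim/last_ind: s t => [|s M IH] t; first by case: t.
case/lastP: t => [|t N]; first by rewrite size_rcons.
rewrite !size_rcons => -[st] e Ss St; rewrite !prodL_rcons.
have Ss' : {in s, forall M, inS M} by move=> L sL; apply: Ss; rewrite mem_rcons in_cons sL orbT.
have St' : {in t, forall M, inS M} by move=> L tL; apply: St; rewrite mem_rcons in_cons tL orbT.
apply: pattern_mul; [|exact: inS_prodL| |exact: inS_prodL| |].
- by apply: Ss; rewrite mem_rcons mem_head.
- by apply: St; rewrite mem_rcons mem_head.
- by have := e (size s); rewrite !nth_rcons ltnn eqxx st ltnn eqxx; apply.
- apply: IH => // k ks; have := e k; rewrite !nth_rcons ks -st ks; apply.
  by rewrite ltnS ltnW.
Qed.

End PositiveProducts.

Section IidProducts.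
Context (R : realType) (q : nat) (d : measure_display) (T : measurableType d).
Variables (P : probability T R) (X : nat -> T -> Mx R q).
Hypotheses (X_S : forall n w, inS (X n w : 'M[R]_q)) (X_iid : iid P X).
Local Open Scope ereal_scope.

Let mX n : measurable_fun setT (X n). Proof. by case: X_iid. Qed.

Lemma Xprod_inS n w : inS (Xprod X n w : 'M[R]_q).
Proof. by elim: n => [|n IH] /=; [exact: inS_1|exact: inS_mul]. Qed.

Lemma Yprod_inS n w : inS (Yprod X n w : 'M[R]_q).
Proof. by rewrite Yprod_trmx; apply: inS_trmx; exact: Xprod_inS. Qed.

Lemma Xprod_prodL n w :
  (Xprod X n w : 'M[R]_q) = prodL (mkseq (fun k => (X k w : 'M[R]_q)) n).
Proof. by elim: n => [|n IH] //=; rewrite mkseqS prodL_rcons IH. Qed.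

Definition pattern_set (p : {ffun 'I_q * 'I_q -> bool}) : set (Mx R q) :=
  [set M | pattern (M : 'M[R]_q) = p].

Lemma measurable_pattern_set p : measurable (pattern_set p).
Proof.
have -> : pattern_set p = [set M : Mx R q | forall ij : 'I_q * 'I_q,
    if p ij then (0 < (M : 'M[R]_q) ij.1 ij.2)%R else ((M : 'M[R]_q) ij.1 ij.2 <= 0)%R].
  apply/seteqP; split => M /=.
    by move=> <- ij; rewrite ffunE; case: ifP => //; rewrite leNgt => ->.
  move=> Mp; apply/ffunP => ij; rewrite ffunE; have := Mp ij.
  by case: (p ij) => // M_le0; apply/negbTE; rewrite -leNgt.
apply: measurable_forall => ij; case: (p ij).
  by apply: measurable_ltr_set; [exact: measurable_cst|exact: entry_mfun].
by apply: measurable_ler_set; [exact: entry_mfun|exact: measurable_cst].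
Qed.

Lemma measurable_X_pattern k p : measurable (X k @^-1` pattern_set p).
Proof. by rewrite -[X in measurable X]setTI; apply: mX => //; exact: measurable_pattern_set. Qed.

Definition pattern_prob p := P (X 0 @^-1` pattern_set p).

Lemma pattern_probE k p : P (X k @^-1` pattern_set p) = pattern_prob p.
Proof.
by have [_ [Xk_law _]] := X_iid; rewrite Xk_law //; exact: measurable_pattern_set.
Qed.

Definition likely (M : 'M[R]_q) := 0 < pattern_prob (pattern M).

Definition Xprod_pos n := [set w | inSo (Xprod X n w : 'M[R]_q)].

Definition Xprod_row_pos (i : 'I_q) n :=
  [set w | forall j, (0 < (Xprod X n w : 'M[R]_q) i j)%R].

Lemma measurable_Xprod_row_pos i n : measurable (Xprod_row_pos i n).
Proof.
apply: measurable_forall => j.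
by apply: measurable_ltr_set; [exact: measurable_cst|exact: Xprod_entry_mfun].
Qed.

Lemma measurable_Xprod_pos n : measurable (Xprod_pos n).
Proof. exact: measurable_forall (measurable_Xprod_row_pos ^~ n). Qed.

(* The factors of a product with positive row [i] avoid, outside a null set,
   the finitely many patterns of probability zero. *)
Lemma likely_row_factors (i : 'I_q) n : (0 < n)%N -> 0 < P (Xprod_row_pos i n) ->
  exists s, [/\ s != [::], {in s, forall M, likely M /\ inS M} &
       forall j, (0 < prodL s i j)%R].
Proof.
move=> n_gt0 row_gt0.
pose Bad := [set w | exists kp : 'I_n * {ffun 'I_q * 'I_q -> bool},
   pattern_prob kp.2 = 0 /\ pattern_set kp.2 (X kp.1 w)].
have Bad_null : P.-negligible Bad.
  apply: negligible_exists_fin => -[k p] /=.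
  have [p0|p_neq0] := pselect (pattern_prob p = 0); last first.
    by apply: negligibleS (negligible_set0 P) => w [/p_neq0].
  apply: (@negligibleS _ _ _ _ (X k @^-1` pattern_set p)); first by move=> w [].
  by apply/(negligibleP _ (measurable_X_pattern k p)); rewrite -p0; exact: pattern_probE.
have /existsNP [w /not_implyP [row_w good_w]] : ~ (Xprod_row_pos i n `<=` Bad).
  move=> /negligibleS /(_ Bad_null) /(measure_negligible (measurable_Xprod_row_pos i n)).
  by move: row_gt0 => /[swap] ->; rewrite ltxx.
exists (mkseq (fun k => (X k w : 'M[R]_q)) n); split.
- by rewrite -size_eq0 size_mkseq -lt0n.
- move=> M /mapP [k]; rewrite mem_iota add0n => /andP[_ kn] ->; split => //.
  rewrite /likely lt0e measure_ge0 andbT; apply/negP => /eqP Xk0; apply: good_w.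
  by exists (Ordinal kn, pattern (X k w : 'M[R]_q)).
- by move=> j; rewrite -Xprod_prodL; exact: row_w.
Qed.

Definition same_patterns (s : seq 'M[R]_q) :=
  [set w | forall k : 'I_(size s), pattern (X k w : 'M[R]_q) = pattern (nth 0%R s k)].

Lemma same_patternsE s : same_patterns s =
  \bigcap_(k in [set` iota 0 (size s)]) (X k @^-1` pattern_set (pattern (nth 0%R s k))).
Proof.
apply/seteqP; split => w /= same_w; last first.
  by move=> k; apply: same_w; rewrite /= mem_iota add0n ltn_ord.
by move=> k /=; rewrite mem_iota add0n => ks; exact: (same_w (Ordinal ks)).
Qed.

Lemma measurable_same_patterns s : measurable (same_patterns s).
Proof.
rewrite same_patternsE; apply: fin_bigcap_measurable; first exact: finite_seq.
by move=> k _; exact: measurable_X_pattern.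
Qed.

Lemma same_patterns_gt0 s : {in s, forall M, likely M} -> 0 < P (same_patterns s).
Proof.
move=> likely_s; have [_ [_ indep]] := X_iid.
rewrite same_patternsE indep ?iota_uniq //; last by move=> k _; exact: measurable_pattern_set.
rewrite big_seq; apply: (big_ind (fun x => 0 < x)) => // [x y x_gt0 y_gt0|k].
  by rewrite mule_gt0.
by rewrite mem_iota add0n pattern_probE => ks; apply: likely_s; rewrite mem_nth.
Qed.

Lemma same_patterns_sub s : inSo (prodL s) -> {in s, forall M, inS M} ->
  same_patterns s `<=` Xprod_pos (size s).
Proof.
move=> s_pos Ss w same_w; suff /patternP e : pattern (Xprod X (size s) w : 'M[R]_q) = pattern (prodL s).
  by move=> i j; rewrite e s_pos.
rewrite Xprod_prodL; apply: pattern_prodL => //.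
- by rewrite size_mkseq.
- by move=> k; rewrite size_mkseq => ks; rewrite nth_mkseq //; exact: (same_w (Ordinal ks)).
- by move=> M /mapP [k _ ->].
Qed.

Lemma Xprod_row_null : (0 < q)%N ->
  P (\bigcup_(n in [set n | (0 < n)%N]) Xprod_pos n) = 0 ->
  forall n, (0 < n)%N -> exists i, P (Xprod_row_pos i n) = 0.
Proof.
move=> q_gt0 U0 n n_gt0; apply: contrapT => /forallNP rows_gt0.
have [s [s0 likely_s s_pos]] : exists s, [/\ s != [::],
    {in s, forall M, likely M /\ inS M} & inSo (prodL s)].
  apply: inSo_prodL_of_rows => // i; apply: likely_row_factors n_gt0 _.
  by rewrite lt0e measure_ge0 andbT; apply/negP => /eqP; exact: rows_gt0.
have := same_patterns_gt0 (fun M sM => (likely_s M sM).1).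
rewrite lt_neqAle measure_ge0 andbT => /negP; apply.
rewrite eq_sym -measure_le0 -U0; apply: le_measure; rewrite ?inE.
- exact: measurable_same_patterns.
- by apply: bigcup_measurable => k _; exact: measurable_Xprod_pos.
move=> w same_w; exists (size s); first by rewrite /= lt0n size_eq0.
by apply: same_patterns_sub => // M /likely_s [].
Qed.

End IidProducts.

Section ContractionCoefficient.
Context (R : realType) (q : nat) (d : measure_display) (T : measurableType d).
Variables (P : probability T R) (X : nat -> T -> Mx R q).
Hypotheses (X_S : forall n w, inS (X n w : 'M[R]_q)) (X_iid : iid P X).

Let mX n : measurable_fun setT (X n). Proof. by case: X_iid. Qed.

Definition Yprod_bounded n k := [set w | forall i j,
  (Yprod X n w : 'M[R]_q) i j <= k.+1%:R /\ 1 <= k.+1%:R * (Yprod X n w : 'M[R]_q) i j].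

Lemma measurable_Yprod_bounded n k : measurable (Yprod_bounded n k).
Proof.
apply: measurable_forall => i; apply: measurable_forall => j; apply: measurableI.
  by apply: measurable_ler_set; [exact: Yprod_entry_mfun|exact: measurable_cst].
apply: measurable_ler_set; first exact: measurable_cst.
by apply: measurable_realfun.measurable_funM; [exact: measurable_cst|exact: Yprod_entry_mfun].
Qed.

Lemma Xprod_pos_sub_bounded n : Xprod_pos X n `<=` \bigcup_k Yprod_bounded n k.
Proof.
move=> w Xw; pose M := (Yprod X n w : 'M[R]_q).
have M_gt0 i j : 0 < M i j by rewrite /M Yprod_trmx mxE; exact: Xw.
pose Minv := \matrix_(i, j) (M i j)^-1.
have M_ge0 i j : 0 <= M i j by exact: ltW.
have Minv_ge0 i j : 0 <= Minv i j by rewrite mxE invr_ge0.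
pose K := \sum_k \sum_l M k l + \sum_k \sum_l Minv k l.
have sum_ge0 (A : 'M[R]_q) : (forall i j, 0 <= A i j) -> 0 <= \sum_k \sum_l A k l.
  by move=> A_ge0; rewrite sumr_ge0 // => k _; rewrite sumr_ge0.
exists (Num.truncn K) => // i j; split.
  apply: le_trans (ltW (truncnS_gt K)).
  by rewrite (le_trans (mx_entry_le_sum i j M_ge0)) // lerDl sum_ge0.
rewrite -ler_pdivrMr // div1r; have := mx_entry_le_sum i j Minv_ge0; rewrite mxE.
by move/le_trans; apply; apply: le_trans (ltW (truncnS_gt K)); rewrite lerDr sum_ge0.
Qed.

(* On [Yprod_bounded n k] the entries of [Y^(n)] lie in [[1/(k+1), k+1]], where the
   contraction ratio is at most [1 - (k+1)^-4]; elsewhere it is at most [1]. *)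
Lemma cmu_le_bounded n k :
  (cmu P X n <= 1 - (((k.+1%:R)^-1 / k.+1%:R) ^+ 2)%:E * P (Yprod_bounded n k))%E.
Proof.
have k_gt0 : 0 < k.+1%:R :> R by rewrite ltr0n.
apply: ge_ereal_sup => _ [y [y' [By By' _ ->]]]; rewrite /mun.
apply: (integral_pushforward_le_indic P (Yprod_mfun mX n) (Yprod_inS X_S n)
  (fun g Sg => ratio_ge0 Sg By By')).
- exact: measurable_Yprod_bounded.
- exact: sqr_ge0.
move=> w; rewrite -/(ratio _ y y') indicE.
have SYw := Yprod_inS X_S n w.
case: (boolP (w \in _)) => [/set_mem Yw|_]; last by rewrite mulr0 addr0 ratio_le1.
rewrite mulr1 -lerBrDr; apply: ratio_le => // i j; last exact: (Yw i j).1.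
by rewrite -div1r ler_pdivrMr // mulrC; exact: (Yw i j).2.
Qed.

Lemma cmu_ge0_or_Ny n : cmu P X n = -oo%E \/ (0 <= cmu P X n)%E.
Proof.
rewrite /cmu; set C := (Z in ereal_sup Z).
have [[r Cr]|C0] := pselect (C !=set0); last first.
  by left; rewrite (_ : C = set0) ?ereal_sup0 // -subset0 => r Cr; apply: C0; exists r.
right; apply: le_trans (ereal_sup_ubound Cr).
case: Cr => [y [y' [By By' _ ->]]].
exact: (integral_pushforward_ge0 P (Yprod_inS X_S n) (fun g Sg => ratio_ge0 Sg By By')).
Qed.

Lemma kappa_le_cmu n : (0 < n)%N -> (kappa P X <= poweR (cmu P X n) n%:R^-1)%E.
Proof. by move=> n_gt0; apply: ereal_inf_lbound; exists n. Qed.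

Lemma kappa_lt1 :
  (0 < P (\bigcup_(n in [set n | (0 < n)%N]) Xprod_pos X n))%E -> (kappa P X < 1)%E.
Proof.
move=> /measure_bigcup_gt0 [|n n_gt0 Xn_gt0]; first exact: measurable_Xprod_pos X_iid.
have [k _ Bk_gt0] : exists2 k, setT k & (0 < P (Yprod_bounded n k))%E.
  apply: measure_bigcup_gt0; first exact: measurable_Yprod_bounded.
  have mB : measurable (\bigcup_k Yprod_bounded n k).
    by apply: bigcup_measurable => k _; exact: measurable_Yprod_bounded.
  apply: lt_le_trans Xn_gt0 (le_measure P (mem_set (measurable_Xprod_pos X_iid n))
    (mem_set mB) (@Xprod_pos_sub_bounded n)).
set c : R := ((k.+1%:R)^-1 / k.+1%:R) ^+ 2.
have c_gt0 : 0 < c by rewrite exprn_gt0 // divr_gt0 // ?invr_gt0 ltr0n.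
have cmu_lt1 : (cmu P X n < 1)%E.
  apply: le_lt_trans (cmu_le_bounded n k) _.
  have : P (Yprod_bounded n k) \is a fin_num.
    by apply: fin_num_measure; exact: measurable_Yprod_bounded.
  move: Bk_gt0; case: (P _) => // p; rewrite lte_fin => p_gt0 _.
  by rewrite -EFinM -EFinB lte_fin gtrBl mulr_gt0.
apply: le_lt_trans (kappa_le_cmu n_gt0) _.
have [->|] := cmu_ge0_or_Ny n; first by rewrite poweRNyr // invr_eq0 pnatr_eq0 -lt0n.
move: cmu_lt1; case: (cmu P X n) => // x; rewrite lte_fin lee_fin => x_lt1 x_ge0.
rewrite poweR_EFin lte_fin.
have := @gt0_ltr_powR R n%:R^-1 _ x 1 _ _ x_lt1; rewrite powR1; apply.
- by rewrite invr_gt0 ltr0n.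
- by rewrite nnegrE.
- by rewrite nnegrE.
Qed.

Lemma cmu_ge1 n (i j : 'I_q) : j != i -> P (Xprod_row_pos X i n) = 0%E -> (1 <= cmu P X n)%E.
Proof.
move=> ji row0; have q_gt0 : (0 < q)%N by case: q i {ji row0} => [[]|].
pose F := [set g : Mx R q | inS (g : 'M[R]_q) /\ exists k, (g : 'M[R]_q) k i <= 0].
have mF : measurable F.
  apply: measurableI; first exact: measurable_inS.
  apply: measurable_exists => k.
  by apply: measurable_ler_set; [exact: entry_mfun|exact: measurable_cst].
have YF : Yprod X n @^-1` F = ~` Xprod_row_pos X i n.
  apply/seteqP; split => w /=.
    by move=> [_ [k]]; rewrite Yprod_trmx mxE leNgt => /negP Xik row_w; exact: Xik.
  move=> /existsNP [k /negP]; rewrite -leNgt => Xik_le0; split; first exact: Yprod_inS.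
  by exists k; rewrite Yprod_trmx mxE.
apply: le_trans (ereal_sup_ubound _); last first.
  exists (unif R q), (evec R i); split; [exact: unif_Bbar|exact: evec_Bbar| |by []].
  by apply/eqP; exact: unif_neq_evec ji.
have <- : P (Yprod X n @^-1` F) = 1%E.
  by rewrite YF probability_setC ?row0 ?sube0 //; exact: (measurable_Xprod_row_pos X_iid).
rewrite /mun; apply: (integral_pushforward_ge_measure P (Yprod_inS X_S n)) => //.
  by move=> g Sg; apply: ratio_ge0 => //; [exact: unif_Bbar|exact: evec_Bbar].
move=> g [[g_ge0 g_row g_col] [k gki]]; rewrite -/(ratio g _ _).
by rewrite (@ratio_unif_evec _ _ _ _ j k) //; apply/eqP; rewrite eq_le gki g_ge0.
Qed.

End ContractionCoefficient.

Lemma kappa_ge1 (R : realType) (q : nat) (d : measure_display) (T : measurableType d)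
    (P : probability T R) (X : nat -> T -> Mx R q) :
  (forall n w, inS (X n w : 'M[R]_q)) -> iid P X ->
  P (\bigcup_(n in [set n | (0 < n)%N]) Xprod_pos X n) = 0%E -> (1 <= kappa P X)%E.
Proof.
move=> X_S X_iid U0; have [q0|q_gt0] := posnP q.
  suff : P setT = 0%E by rewrite probability_setT => /eqP; rewrite eqe oner_eq0.
  apply/eqP; rewrite eq_le measure_ge0 andbT -U0 le_measure ?inE //.
  - by apply: bigcup_measurable => n _; exact: (measurable_Xprod_pos X_iid).
  - by move=> w _; exists 1%N => // i; move: (ltn_ord i); rewrite {2}q0.
apply: le_ereal_inf_tmp => _ [n n_gt0 <-].
have [i row0] := Xprod_row_null X_S X_iid q_gt0 U0 n_gt0.
have [j ji] : exists j : 'I_q, j != i.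
  apply: contrapT => /forallNP all_i; move: row0; apply/eqP.
  rewrite (_ : Xprod_row_pos X i n = setT) ?probability_setT ?oner_eq0 //.
  apply/seteqP; split => // w _ j; have [_ Xrow _] := Xprod_inS X_S n w.
  have [l Xil] := Xrow i; have eq_i k : k = i by apply/eqP/negPn/negP; exact: all_i.
  by rewrite (eq_i j); rewrite (eq_i l) in Xil.
have cmu_ge1 := cmu_ge1 X_S X_iid ji row0.
rewrite -(poweR1r n%:R^-1); apply: gt0_ler_poweR => //;
  by rewrite in_itv /= leey andbT ?(le_trans _ cmu_ge1).
Qed.

Theorem mainTheorem3 (R : realType) (q : nat) (d : measure_display)
  (T : measurableType d) (P : probability T R) (X : nat -> T -> Mx R q) :
  (forall n w, inS (X n w : 'M[R]_q)) ->
  iid P X ->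
  ((0 < P (\bigcup_(n in [set n : nat | (0 < n)%N])
              [set w | inSo (Xprod X n w : 'M[R]_q)]))%E
   <-> (kappa P X < 1)%E).
Proof.
move=> X_S X_iid; split; first exact: kappa_lt1.
rewrite lt0e measure_ge0 andbT; apply: contraPneq => U0.
by apply/negP; rewrite -leNgt kappa_ge1.
Qed.
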